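(* Let $X$ be a shift space which is eventually dendric with threshold $n$, let $U\subseteq\mathcal L(X)$ be a finite bifix code which is two-sided $X$-complete, and let $Y$ be the complete bifix decoding of $X$ with respect to $U$. Then $Y$ is eventually dendric with threshold $n$.
   Context: $A$ is a finite alphabet; a shift space is a closed shift-invariant subset $X\subseteq A^{\mathbb Z}$; $\mathcal L(X)$ is its set of finite factors. For a shift space $Z$ over an alphabet $C$ and $w\in\mathcal L(Z)$, $\mathcal E_1(w)$ is the undirected bipartite graph with vertex set the disjoint union of $\{a\in C: aw\in\mathcal L(Z)\}$ and $\{b\in C: wb\in\mathcal L(Z)\}$ and an edge $(a,b)$ iff $awb\in\mathcal L(Z)$; $Z$ is eventually dendric with threshold $n$ if $\mathcal E_1(w)$ is a tree for every $w\in\mathcal L(Z)$ of length $\ge n$. A bifix code is a set of words none of which is a proper prefix or a proper suffix of another. A set $U\subseteq\mathcal L(X)$ is right (resp. left) $X$-complete if every long enough word of $\mathcal L(X)$ has a prefix (resp. suffix) in $U$, and two-sided $X$-complete if it is both. Given such a finite bifix code $U$, a coding morphism is a bijection $\varphi:B\to U$ from an alphabet $B$, extended to a morphism $B^*\to A^*$; the set $\varphi^{-1}(\mathcal L(X))$ is the language of a shift space $Y\subseteq B^{\mathbb Z}$, called the complete bifix decoding of $X$ with respect to $U$. *)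

From Stdlib Require Import ZArith Relations.
From mathcomp Require Import all_boot.
Set Implicit Arguments. Unset Strict Implicit. Unset Printing Implicit Defensive.

Section Shifts.
Variable A : finType.

Definition shift (x : Z -> A) : Z -> A := fun i => x (Z.add i 1%Z).

Definition window (x : Z -> A) (i : Z) (n : nat) : seq A :=
  mkseq (fun k => x (Z.add i (Z.of_nat k))) n.

(* X is closed in the product topology: a point all of whose cylinder
   neighbourhoods (centered windows [-n,n]) meet X belongs to X. *)
Definition closed_set (X : (Z -> A) -> Prop) : Prop :=
  forall x, (forall n : nat, exists y, X y /\
              forall i : Z, (Z.abs_nat i <= n)%N -> y i = x i) -> X x.

Definition shift_invariant (X : (Z -> A) -> Prop) : Prop :=
  forall x, X x <-> X (shift x).

Definition is_shift_space (X : (Z -> A) -> Prop) : Prop :=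
  closed_set X /\ shift_invariant X.

Definition Lang (X : (Z -> A) -> Prop) (w : seq A) : Prop :=
  exists x i, X x /\ window x i (size w) = w.

Section Graphs.
Variable V : eqType.
Variable P : V -> Prop.
Variable E : V -> V -> Prop.

Definition graph_connected : Prop :=
  forall u v, P u -> P v ->
    clos_refl_trans V (fun x y => [/\ P x, P y & E x y]) u v.

Definition graph_acyclic : Prop :=
  ~ exists (u : V) (c' : seq V),
      let c := u :: c' in
      [/\ uniq c, (3 <= size c)%N, (forall z, z \in c -> P z) &
          forall i, (i < size c)%N ->
             E (nth u c i) (nth u c (i.+1 %% size c))].

Definition graph_is_tree : Prop := graph_connected /\ graph_acyclic.
End Graphs.

(* vertices: inl a for left extensions a (a w in L), inr b for right
   extensions b (w b in L); edges (a,b) iff a w b in L (undirected). *)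
Definition ext_vertex (L : seq A -> Prop) (w : seq A) (v : A + A) : Prop :=
  match v with
  | inl a => L (a :: w)
  | inr b => L (rcons w b)
  end.

Definition ext_edge (L : seq A -> Prop) (w : seq A) (u v : A + A) : Prop :=
  match u, v with
  | inl a, inr b => L (a :: rcons w b)
  | inr b, inl a => L (a :: rcons w b)
  | _, _ => False
  end.

Definition E1_is_tree (L : seq A -> Prop) (w : seq A) : Prop :=
  graph_is_tree (ext_vertex L w) (ext_edge L w).

Definition eventually_dendric (Z : (Z -> A) -> Prop) (n : nat) : Prop :=
  forall w, Lang Z w -> (n <= size w)%N -> E1_is_tree (Lang Z) w.

Definition bifix_code (U : seq (seq A)) : Prop :=
  forall u v, u \in U -> v \in U ->
    (prefix u v -> u = v) /\ (suffix u v -> u = v).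

Definition right_complete (X : (Z -> A) -> Prop) (U : seq (seq A)) : Prop :=
  exists N : nat, forall w, Lang X w -> (N <= size w)%N ->
    exists2 u, u \in U & prefix u w.

Definition left_complete (X : (Z -> A) -> Prop) (U : seq (seq A)) : Prop :=
  exists N : nat, forall w, Lang X w -> (N <= size w)%N ->
    exists2 u, u \in U & suffix u w.

Definition two_sided_complete (X : (Z -> A) -> Prop) (U : seq (seq A)) : Prop :=
  right_complete X U /\ left_complete X U.
End Shifts.

Definition morph_ext (A B : Type) (phi : B -> seq A) (v : seq B) : seq A :=
  flatten (map phi v).

(* Coding by phi maps the extension graph of a word w of Y isomorphically onto the
   graph E_{U,U}(phi w) of X, whose left (right) vertices are the words s (t) of U with
   s phi(w) (phi(w) t) in L(X), and whose edges are the pairs with s phi(w) t in L(X);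
   moreover |phi(w)| >= |w|. It thus suffices that E_{S,T}(W) is a tree whenever
   |W| >= n, S is an X-maximal suffix code and T an X-maximal prefix code. For S and T
   the alphabet this is eventual dendricity. Otherwise let c u be a longest word of S
   and S' the code obtained by replacing the words c' u of S by u: E_{S,T}(W) arises
   from E_{S',T}(W) by replacing the vertex u with the vertices c' u, and the subgraph
   spanned by these and the neighbours of u is a copy of E_{A,T}(u W). Substituting a
   tree for a vertex of a tree gives a tree, so induction on the total length of S
   reduces S to the alphabet, and reversing all words does the same for T. *)

From Stdlib Require Import ZArith Relations.
From mathcomp Require Import all_boot.
From Stdlib Require Import Classical ClassicalEpsilon.
From mathcomp Require Import zify.
Set Implicit Arguments. Unset Strict Implicit. Unset Printing Implicit Defensive.

(** * Trees *)

Lemma clos_rt_mono (V : Type) (R R' : relation V) :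
  (forall x y, R x y -> R' x y) ->
  forall x y, clos_refl_trans V R x y -> clos_refl_trans V R' x y.
Proof.
move=> hRR' x y; elim=> [u v /hRR'|u|u v w _ huv _ hvw]; first exact: rt_step.
  exact: rt_refl.
exact: rt_trans huv hvw.
Qed.

Lemma clos_rt_sym (V : Type) (R : relation V) :
  (forall x y, R x y -> R y x) ->
  forall x y, clos_refl_trans V R x y -> clos_refl_trans V R y x.
Proof.
move=> hR x y; elim=> [u v /hR|u|u v w _ hvu _ hwv]; first exact: rt_step.
  exact: rt_refl.
exact: rt_trans hwv hvu.
Qed.

Section Bridges.
Variables (V : Type) (P : V -> Prop) (E : V -> V -> Prop).

Definition edge_in (x y : V) : Prop := [/\ P x, P y & E x y].

Definition edge_avoiding (a b x y : V) : Prop :=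
  [/\ P x, P y, E x y & ~ (x = a /\ y = b \/ x = b /\ y = a)].

Lemma edge_avoiding_sym a b :
  (forall x y, E x y -> E y x) ->
  forall x y, edge_avoiding a b x y -> edge_avoiding a b y x.
Proof.
move=> hE x y [px py exy hab]; split=> //; first exact: hE.
by move=> h; apply: hab; tauto.
Qed.

Lemma edge_avoidingC a b x y : edge_avoiding a b x y -> edge_avoiding b a x y.
Proof. by case=> px py exy hab; split=> //; tauto. Qed.

Lemma clos_rt_edge_avoiding_in a b x y :
  clos_refl_trans V (edge_avoiding a b) x y -> P x -> P y.
Proof.
move=> h; elim: (clos_rt_rt1n _ _ _ _ h) => // u v w [_ pv _ _] _ IH _.
exact: IH.
Qed.
End Bridges.

(* Trees are handled as connected graphs all of whose edges are bridges, a form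
   better suited to reasoning on paths than the absence of cycles. *)
Definition bridge_tree (V : eqType) (P : V -> Prop) (E : V -> V -> Prop) : Prop :=
  graph_connected P E /\
  forall a b, P a -> P b -> E a b -> ~ clos_refl_trans V (edge_avoiding P E a b) b a.

Section Transfer.
Variables (V V' : eqType) (P : V -> Prop) (E : V -> V -> Prop).
Variables (P' : V' -> Prop) (E' : V' -> V' -> Prop) (R : V -> V' -> Prop).
Hypothesis R_functional : forall v w1 w2, R v w1 -> R v w2 -> w1 = w2.
Hypothesis R_injective : forall v1 v2 w, R v1 w -> R v2 w -> v1 = v2.
Hypothesis R_total : forall v, P v -> exists w, R v w.
Hypothesis R_onto : forall w, P' w -> exists v, R v w.
Hypothesis R_vertex : forall v w, R v w -> (P v <-> P' w).
Hypothesis R_edge : forall v1 v2 w1 w2, R v1 w1 -> R v2 w2 -> P v1 -> P v2 ->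
  (E v1 v2 <-> E' w1 w2).

Lemma graph_connected_transfer : graph_connected P E -> graph_connected P' E'.
Proof.
move=> hc u' v' pu' pv'.
have [u ru] := R_onto pu'; have [v rv] := R_onto pv'.
have := clos_rt_rt1n _ _ _ _ (hc u v ((R_vertex ru).2 pu') ((R_vertex rv).2 pv')).
move=> h; elim: h u' v' ru rv {pu' pv'} => [x|x m y [px pm exm] _ IH] u' v' ru rv.
  by rewrite (R_functional ru rv); apply: rt_refl.
have [m' rm] := R_total pm.
apply: rt_trans (IH _ _ rm rv); apply: rt_step; split.
- exact: (R_vertex ru).1.
- exact: (R_vertex rm).1.
- exact: (R_edge ru rm px pm).1.
Qed.

Lemma bridge_tree_transfer : bridge_tree P E -> bridge_tree P' E'.
Proof.
move=> [hc hbr]; split; first exact: graph_connected_transfer.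
move=> a' b' pa' pb' eab' hpath.
have [a ra] := R_onto pa'; have [b rb] := R_onto pb'.
have pa := (R_vertex ra).2 pa'; have pb := (R_vertex rb).2 pb'.
apply: (hbr a b pa pb ((R_edge ra rb pa pb).2 eab')).
have lift x' y' : clos_refl_trans_1n V' (edge_avoiding P' E' a' b') x' y' -> y' = a' ->
    forall x, R x x' -> clos_refl_trans V (edge_avoiding P E a b) x a.
  elim=> [u|u m y [pu pm eum hne] _ IH] ey x rx.
    by subst; rewrite (R_injective rx ra); apply: rt_refl.
  have [mm rm] := R_onto pm.
  apply: rt_trans (IH ey _ rm); apply: rt_step.
  have px := (R_vertex rx).2 pu; have pmm := (R_vertex rm).2 pm.
  split=> //; first exact: (R_edge rx rm px pmm).2.
  move=> [[e1 e2]|[e1 e2]]; apply: hne; subst.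
    by left; split; [exact: R_functional rx ra | exact: R_functional rm rb].
  by right; split; [exact: R_functional rx rb | exact: R_functional rm ra].
exact: lift (clos_rt_rt1n _ _ _ _ hpath) erefl b rb.
Qed.
End Transfer.

Lemma bridge_tree_iso (V V' : eqType) (P : V -> Prop) (E : V -> V -> Prop)
    (P' : V' -> Prop) (E' : V' -> V' -> Prop) (f : V -> V') :
  injective f -> (forall y, P' y -> exists x, y = f x) ->
  (forall x, P' (f x) <-> P x) ->
  (forall x y, P x -> P y -> (E' (f x) (f y) <-> E x y)) ->
  bridge_tree P' E' <-> bridge_tree P E.
Proof.
move=> finj fonto fP fE; split.
  apply: (@bridge_tree_transfer _ _ _ _ _ _ (fun y x => y = f x)).
  - by move=> ? ? ? -> /finj.
  - by move=> ? ? ? -> ->.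
  - exact: fonto.
  - by move=> x _; exists (f x).
  - by move=> ? x ->.
  - by move=> ? ? x1 x2 -> -> /fP px1 /fP px2; apply: fE.
apply: (@bridge_tree_transfer _ _ _ _ _ _ (fun x y => y = f x)).
- by move=> ? ? ? -> ->.
- by move=> ? ? ? -> /finj.
- by move=> x _; exists (f x).
- exact: fonto.
- by move=> x ? ->; apply: iff_sym.
- by move=> x1 x2 ? ? -> -> px1 px2; apply: iff_sym; apply: fE.
Qed.

Lemma bridge_tree_ext (V : eqType) (P P' : V -> Prop) (E E' : V -> V -> Prop) :
  (forall x, P x <-> P' x) -> (forall x y, E x y <-> E' x y) ->
  bridge_tree P E -> bridge_tree P' E'.
Proof.
move=> hP hE hT; apply/(@bridge_tree_iso V V P E P' E' id) => //.
- by move=> y _; exists y.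
- by move=> x; apply: iff_sym.
- by move=> x y _ _; apply: iff_sym.
Qed.

Lemma bridge_tree_empty (V : eqType) (P : V -> Prop) (E : V -> V -> Prop) :
  (forall x, ~ P x) -> bridge_tree P E.
Proof. by move=> h; split=> [u v /h|a b /h]. Qed.

Section Cycles.
Variables (V : eqType) (P : V -> Prop) (E : V -> V -> Prop).

Lemma cycle_avoiding_path (u : V) (c' : seq V) : let c := u :: c' in
  uniq c -> 3 <= size c -> (forall z, z \in c -> P z) ->
  (forall i, i < size c -> E (nth u c i) (nth u c (i.+1 %% size c))) ->
  clos_refl_trans V (edge_avoiding P E u (nth u c 1)) (nth u c 1) u.
Proof.
move=> c huniq hsize hP hE; set k := size c in hsize hE.
have nthP i : i < k -> P (nth u c i) by move=> hi; apply: hP; apply: mem_nth.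
have nth_inj i j : i < k -> j < k -> nth u c i = nth u c j -> i = j.
  by move=> hi hj e; apply/eqP; rewrite -(nth_uniq u hi hj huniq) e.
have k0 : 0 < k by lia.
have k1 : 1 < k by lia.
suff walk d j : j + d = k.-1 -> 0 < j ->
    clos_refl_trans V (edge_avoiding P E u (nth u c 1)) (nth u c j) u.
  by apply: (walk (k - 2)); lia.
elim: d j => [|d IH] j hjd hj.
  have hjk : j < k by lia.
  have := hE j hjk; rewrite addn0 in hjd; rewrite hjd prednK ?modnn // -hjd => Ej.
  apply: rt_step; split; [exact: nthP | exact: hP (mem_head _ _) | exact: Ej |].
  move=> [[e1 _]|[e1 _]].
    by have := nth_inj j 0 hjk k0 e1; lia.
  by have := nth_inj j 1 hjk k1 e1; lia.
have hjk : j.+1 < k by lia.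
apply: rt_trans (IH j.+1 _ isT); last by lia.
have := hE j (ltnW hjk); rewrite modn_small // => Ej.
apply: rt_step; split; [exact: nthP (ltnW hjk) | exact: nthP | exact: Ej |].
move=> [[e1 _]|[e1 e2]].
  by have := nth_inj j 0 (ltnW hjk) k0 e1; lia.
have := nth_inj j 1 (ltnW hjk) k1 e1 => ej; subst j.
by have := nth_inj 2 0 hjk k0 e2.
Qed.

Lemma graph_is_tree_of_bridge : bridge_tree P E -> graph_is_tree P E.
Proof.
move=> [hc hbr]; split=> // -[u [c' [huniq hsize hP hE]]].
have E01 : E u (nth u (u :: c') 1).
  by have := hE 0 (ltnW (ltnW hsize)); rewrite modn_small // ltnW.
have P1 : P (nth u (u :: c') 1) by apply/hP/mem_nth; lia.
apply: (hbr _ _ (hP u (mem_head _ _)) P1 E01).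
exact: cycle_avoiding_path.
Qed.

Definition propb (Q : Prop) : bool := if excluded_middle_informative Q then true else false.

Lemma propbP (Q : Prop) : reflect Q (propb Q).
Proof. by rewrite /propb; case: excluded_middle_informative => h; constructor. Qed.

Lemma bridge_tree_of_graph_is_tree :
  (forall x, ~ E x x) -> graph_is_tree P E -> bridge_tree P E.
Proof.
move=> hirr [hc hac]; split=> // a b pa pb eab hba; apply: hac.
pose e x y := propb (edge_avoiding P E a b x y).
have [p [hp hl]] : exists p, path e b p /\ last b p = a.
  elim: (clos_rt_rt1n _ _ _ _ hba) => [u|u m w h _ [p [hp hl]]]; first by exists [::].
  by exists (m :: p); split=> //=; rewrite hp andbT; apply/propbP.
move: hl; case: (shortenP hp) => p' hp' hu _ hl.
have p'P z : z \in p' -> P z.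
  move: (b) hp'; elim: (p') => // m q IH x /= /andP[/propbP [_ pm _ _] hq].
  by rewrite inE => /orP[/eqP -> //|]; exact: IH hq.
exists b, p'; split => //.
- case: p' hp' hl {hu p'P} => [|m [|m' q]] //=.
    by move=> _ hba'; subst; case: (hirr a).
  by rewrite andbT => /propbP [_ _ _ h] hm; subst m; case: h; right.
- by move=> z; rewrite inE => /orP[/eqP -> //|]; exact: p'P.
move=> i; rewrite ltnS leq_eqVlt => /orP[/eqP ->|hi].
  by rewrite modnn /= -last_nth hl.
rewrite (modn_small (hi : i.+1 < (size p').+1)) /=.
by have /(pathP b) h := hp'; have /propbP [_ _ ? _] := h i hi.
Qed.
End Cycles.

(** * Substituting a tree for a vertex *)

(* The graph [P2, E2] arises from [P1, E1] by replacing the vertex [z] with the set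
   [N] of new vertices; [link_vertex] spans the subgraph made of the new vertices and
   the old neighbours of [z]. *)
Section Substitution.
Variables (V : eqType) (P1 P2 : V -> Prop) (E1 E2 : V -> V -> Prop).
Variables (N : V -> Prop) (z : V).
Hypothesis E1_sym : forall x y, E1 x y -> E1 y x.
Hypothesis E2_sym : forall x y, E2 x y -> E2 y x.
Hypothesis N_P2 : forall x, N x -> P2 x.
Hypothesis z_notin_P2 : ~ P2 z.

Definition old_vertex (x : V) : Prop := P2 x /\ ~ N x.
Definition link_vertex (x : V) : Prop := N x \/ (old_vertex x /\ E1 z x).

Hypothesis P1_split : forall x, P1 x <-> (x = z /\ exists y, N y) \/ old_vertex x.
Hypothesis old_edge : forall x y, old_vertex x -> old_vertex y -> (E1 x y <-> E2 x y).
Hypothesis new_edge : forall x y, N x -> E2 x y -> P2 y -> old_vertex y /\ E1 z y.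
Hypothesis new_edge_onto : forall y, old_vertex y -> E1 z y -> exists x, N x /\ E2 x y.

Lemma link_vertex_P2 x : link_vertex x -> P2 x.
Proof. by case=> [/N_P2 | [[]]]. Qed.

Lemma old_vertex_P1 x : old_vertex x -> P1 x.
Proof. by move=> ox; apply/P1_split; right. Qed.

Lemma z_P1 x : N x -> P1 z.
Proof. by move=> nx; apply/P1_split; left; split=> //; exists x. Qed.

Lemma z_not_old : ~ old_vertex z.
Proof. by case. Qed.

Definition represents (x u : V) : Prop := N x /\ u = z \/ ~ N x /\ u = x.

Lemma represents_fun x u v : represents x u -> represents x v -> u = v.
Proof. by case=> [[nx ->]|[nx ->]] [[? ->]|[? ->]]. Qed.

Lemma represents_exists x : exists u, represents x u.
Proof. by case: (classic (N x)) => nx; [exists z; left | exists x; right]. Qed.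

Lemma represented_P1 x u : P2 x -> represents x u -> P1 u.
Proof. by move=> px [[nx ->]|[nx ->]]; [exact: z_P1 nx | exact: old_vertex_P1]. Qed.

Lemma P1_represented u : P1 u -> exists x, P2 x /\ represents x u.
Proof.
case/P1_split=> [[-> [x nx]]|[pu nu]]; first by exists x; split; [exact: N_P2 | left].
by exists u; split=> //; right.
Qed.

Hypothesis P1_tree : bridge_tree P1 E1.
Hypothesis link_tree : bridge_tree link_vertex E2.

Lemma new_connected x y : N x -> N y -> clos_refl_trans V (edge_in P2 E2) x y.
Proof.
move=> nx ny; apply: (clos_rt_mono _ (link_tree.1 x y (or_introl nx) (or_introl ny))).
by move=> u v [pu pv e]; split=> //; apply: link_vertex_P2.
Qed.

Lemma represented_connected x y u : P2 x -> P2 y -> represents x u -> represents y u ->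
  clos_refl_trans V (edge_in P2 E2) x y.
Proof.
move=> px py [[nx ->]|[nx ->]] [[ny e]|[ny e]].
- exact: new_connected.
- by case: z_notin_P2; rewrite e.
- by case: z_notin_P2; rewrite -e.
- by rewrite e; apply: rt_refl.
Qed.

Lemma represented_edge x y u v : P2 x -> P2 y -> represents x u -> represents y v ->
  edge_in P1 E1 u v -> clos_refl_trans V (edge_in P2 E2) x y.
Proof.
move=> px py [[nx ->]|[nx ->]] [[ny ->]|[ny ->]] [_ _ euv].
- exact: new_connected.
- have [x0 [nx0 ex0y]] := new_edge_onto (conj py ny) euv.
  apply: rt_trans (new_connected nx nx0) (rt_step _ _ _ _ _).
  by split=> //; exact: N_P2.
- have [y0 [ny0 ey0x]] := new_edge_onto (conj px nx) (E1_sym euv).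
  apply: rt_trans (rt_step _ _ _ _ _) (new_connected ny0 ny).
  by split=> //; [exact: N_P2 | exact: E2_sym].
- by apply: rt_step; split=> //; apply/old_edge.
Qed.

Lemma subst_connected : graph_connected P2 E2.
Proof.
move=> x y px py.
have [u cx] := represents_exists x; have [v cy] := represents_exists y.
have := clos_rt_rt1n _ _ _ _ (P1_tree.1 u v (represented_P1 px cx) (represented_P1 py cy)).
move=> h; elim: h x px cx cy => [u0|u0 m v0 um _ IH] x0 px0 cx0 cy0.
  exact: represented_connected px0 py cx0 cy0.
have [xm [pxm cm]] : exists xm, P2 xm /\ represents xm m by case: um => _ /P1_represented.
exact: rt_trans (represented_edge px0 pxm cx0 cm um) (IH _ pxm cm cy0).
Qed.

Lemma branch_old v x : old_vertex v -> E1 z v -> P1 z ->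
  clos_refl_trans V (edge_avoiding P1 E1 z v) v x -> old_vertex x /\ (E1 z x -> x = v).
Proof.
move=> ov ezv P1z dvx.
have P1v := old_vertex_P1 ov.
have P1x : P1 x := clos_rt_edge_avoiding_in dvx P1v.
have xz : x <> z by move=> exz; subst x; exact: (P1_tree.2 z v P1z P1v ezv dvx).
split; first by case/P1_split: P1x => [[]|].
move=> ezx; apply: NNPP => xv; apply: (P1_tree.2 z v P1z P1v ezv).
apply: rt_trans dvx _; apply: rt_step; split=> //; first exact: E1_sym.
by move=> [[]|[]].
Qed.

Lemma subst_bridge_new a b : N a -> old_vertex b -> E2 a b ->
  ~ clos_refl_trans V (edge_avoiding P2 E2 a b) a b.
Proof.
move=> na ob eab hab.
have P1z := z_P1 na.
pose CH x := clos_refl_trans V (edge_avoiding link_vertex E2 a b) a x.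
(* [C] contains the component of [a] once the edge [ab] is removed: what [a] reaches
   in the link graph, plus the branches of [P1] hanging at the old neighbours of [z]
   so reached. It is closed under the edges of [P2] other than [ab] but misses [b]. *)
pose C x := CH x \/ exists v, [/\ CH v, old_vertex v &
  clos_refl_trans V (edge_avoiding P1 E1 z v) v x].
have La : link_vertex a by left.
have CH_link x : CH x -> link_vertex x by move=> h; exact: clos_rt_edge_avoiding_in h La.
have CH_old_z v : CH v -> old_vertex v -> E1 z v by move=> /CH_link [nv|[]//]; case.
have notCb : ~ C b.
  have ezb := (new_edge na eab ob.1).2.
  have nCH : ~ CH b.
    move=> h; apply: (link_tree.2 a b La (or_intror (conj ob ezb)) eab).
    by apply: clos_rt_sym h => x y; apply: edge_avoiding_sym.
  move=> [//|[v [cv ov dvb]]].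
  have [_ h] := branch_old ov (CH_old_z v cv ov) P1z dvb.
  by apply: nCH; rewrite (h ezb).
apply: notCb.
have step x y : clos_refl_trans_1n V (edge_avoiding P2 E2 a b) x y -> C x -> C y.
  elim=> // x0 y0 w [px py exy hne] _ IH cx; apply: IH.
  have to_CH : CH x0 -> link_vertex y0 -> C y0.
    move=> cx0 ly; have lx := CH_link x0 cx0.
    by left; apply: rt_trans cx0 (rt_step _ _ _ _ _).
  have old_step v : old_vertex x0 -> old_vertex y0 -> edge_avoiding P1 E1 z v x0 y0.
    move=> ox oy; split; [exact: old_vertex_P1 | exact: old_vertex_P1 | exact/old_edge |].
    by move=> [[e _]|[_ e]]; apply: z_not_old; rewrite -e.
  case: cx => [cx|[v [cv ov dvx]]].
    case: (CH_link x0 cx) => [nx|[ox _]].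
      by apply: to_CH cx _; right; exact: new_edge nx exy py.
    case: (classic (N y0)) => ny; first by apply: to_CH cx _; left.
    by right; exists x0; split=> //; apply: rt_step; apply: old_step.
  have [ox hx] := branch_old ov (CH_old_z v cv ov) P1z dvx.
  case: (classic (N y0)) => ny.
    have exv := hx (new_edge ny (E2_sym exy) px).2; subst x0.
    by apply: to_CH cv _; left.
  right; exists v; split=> //; apply: rt_trans dvx (rt_step _ _ _ _ _).
  exact: old_step.
exact: step (clos_rt_rt1n _ _ _ _ hab) (or_introl (rt_refl _ _ _)).
Qed.

Lemma represents_step a b x y u v : old_vertex a -> old_vertex b ->
  edge_avoiding P2 E2 a b x y -> represents x u -> represents y v ->
  clos_refl_trans V (edge_avoiding P1 E1 a b) u v.
Proof.
move=> oa ob [px py exy hne] cx cy; apply: rt_step.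
have za : z <> a by move=> e; apply: z_not_old; rewrite e.
have zb : z <> b by move=> e; apply: z_not_old; rewrite e.
case: cx cy => [[nx ->]|[nx ->]] [[ny ->]|[ny ->]].
- by case: (new_edge nx exy py) => -[].
- have [oy ezy] := new_edge nx exy py.
  split; [exact: z_P1 nx | exact: old_vertex_P1 | exact: ezy |].
  by move=> [[e _]|[e _]]; [apply: za | apply: zb].
- have [ox ezx] := new_edge ny (E2_sym exy) px.
  split; [exact: old_vertex_P1 | exact: z_P1 ny | exact: E1_sym |].
  by move=> [[_ e]|[_ e]]; [apply: zb | apply: za].
- split; [exact: old_vertex_P1 | exact: old_vertex_P1 | exact/old_edge | exact: hne].
Qed.

Lemma represents_path a b x y u v : old_vertex a -> old_vertex b ->
  clos_refl_trans V (edge_avoiding P2 E2 a b) x y -> represents x u -> represents y v ->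
  clos_refl_trans V (edge_avoiding P1 E1 a b) u v.
Proof.
move=> oa ob h; elim: h u v => [x0 y0 hxy|x0|x0 m y0 _ IH1 _ IH2] u v cx cy.
- exact: represents_step hxy cx cy.
- by rewrite (represents_fun cx cy); apply: rt_refl.
- have [w cm] := represents_exists m.
  exact: rt_trans (IH1 _ _ cx cm) (IH2 _ _ cm cy).
Qed.

Lemma subst_bridge_tree : bridge_tree P2 E2.
Proof.
split; first exact: subst_connected.
move=> a b pa pb eab hba.
case: (classic (N a)) => na.
  apply: (subst_bridge_new na (new_edge na eab pb).1 eab).
  by apply: clos_rt_sym hba => x y; apply: edge_avoiding_sym.
case: (classic (N b)) => nb.
  apply: (subst_bridge_new nb (new_edge nb (E2_sym eab) pa).1 (E2_sym eab)).
  by apply: clos_rt_mono hba => x y; apply: edge_avoidingC.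
have oa : old_vertex a by []; have ob : old_vertex b by [].
apply: (P1_tree.2 a b (old_vertex_P1 oa) (old_vertex_P1 ob) ((old_edge oa ob).2 eab)).
by apply: represents_path oa ob hba _ _; right.
Qed.
End Substitution.

(** * Extension graphs relative to codes *)

Lemma suffix_cons_inv (T : eqType) (s w : seq T) c : suffix s (c :: w) -> s = c :: w \/ suffix s w.
Proof.
case/suffixP => [[|d p]] /= e; first by left.
by right; case: e => _ ->; exact: suffix_suffix.
Qed.

Lemma suffix_size_eq (T : eqType) (s w : seq T) : suffix s w -> size s = size w -> s = w.
Proof. by case/suffixP => -[|? ?] -> //=; rewrite size_cat /=; lia. Qed.

Lemma catIs (T : eqType) (u s1 s2 : seq T) : s1 ++ u = s2 ++ u -> s1 = s2.
Proof.
move=> e; have hs : size s1 = size s2 by have := congr1 size e; rewrite !size_cat; lia.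
by apply/eqP; have := @eqseq_cat _ s1 s2 u u hs; rewrite e !eqxx andbT => <-.
Qed.

Lemma prefix_total (A : eqType) (a b c : seq A) :
  prefix a c -> prefix b c -> prefix a b || prefix b a.
Proof.
rewrite !prefixE => /eqP ea /eqP eb; apply/orP.
have [h|/ltnW h] := leqP (size a) (size b); [left|right].
  by rewrite -eb take_takel // ea.
by rewrite -ea take_takel // eb.
Qed.

Lemma suffix_total (A : eqType) (a b c : seq A) :
  suffix a c -> suffix b c -> suffix a b || suffix b a.
Proof. exact: prefix_total. Qed.

Lemma longest_word (T : eqType) (S : seq (seq T)) : S != [::] -> exists2 u, u \in S & {in S, forall s, size s <= size u}.
Proof.
elim: S => // x S IH _; case: (S =P [::]) => [->|/eqP hS].
  by exists x; rewrite ?mem_head // => s; rewrite inE => /eqP ->.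
have [u uS hu] := IH hS.
case: (leqP (size u) (size x)) => h.
  exists x; first exact: mem_head.
  by move=> s; rewrite inE => /orP[/eqP -> //|/hu /leq_trans]; apply.
exists u; first by rewrite inE uS orbT.
by move=> s; rewrite inE => /orP[/eqP ->|/hu //]; exact: ltnW.
Qed.

Lemma sumn_size_filter (T : eqType) (p : pred (seq T)) (S : seq (seq T)) u : u \in S -> ~~ p u ->
  sumn (map size (filter p S)) + size u <= sumn (map size S).
Proof.
elim: S => // x S IH; rewrite inE => /orP[/eqP <-|uS] npu /=.
  rewrite (negbTE npu) addnC leq_add2l.
  by elim: (S) => //= y S' IH'; case: (p y) => /=; lia.
by case: (p x) => /=; have := IH uS npu; lia.
Qed.

Lemma rev_inj {T : Type} : injective (@rev T).
Proof. exact: inv_inj (@revK T). Qed.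

Section Words.
Variable A : finType.
Implicit Types (L : seq A -> Prop) (W s t u : seq A) (S T : seq (seq A)).

Definition gext_vertex L W S T (x : seq A + seq A) : Prop :=
  match x with
  | inl s => s \in S /\ L (s ++ W)
  | inr t => t \in T /\ L (W ++ t)
  end.

Definition gext_edge L W (x y : seq A + seq A) : Prop :=
  match x, y with
  | inl s, inr t | inr t, inl s => L (s ++ W ++ t)
  | _, _ => False
  end.

Definition factor_closed L := forall u v w, L (u ++ v ++ w) -> L v.
Definition left_extendable L := forall w, L w -> exists a, L (a :: w).
Definition right_extendable L := forall w, L w -> exists a, L (rcons w a).

Definition maximal_suffix_code L S :=
  {in S &, forall s1 s2, suffix s1 s2 -> s1 = s2} /\
  forall w, L w -> exists2 s, s \in S & suffix s w || suffix w s.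

Definition maximal_prefix_code L T :=
  {in T &, forall t1 t2, prefix t1 t2 -> t1 = t2} /\
  forall w, L w -> exists2 t, t \in T & prefix t w || prefix w t.

Definition letters : seq (seq A) := [seq [:: a] | a <- enum A].

Lemma mem_letters s : s \in letters <-> exists c, s = [:: c].
Proof.
split; first by case/mapP => c _ ->; exists c.
by move=> [c ->]; apply: map_f; rewrite mem_enum.
Qed.

Lemma gext_edge_sym L W x y : gext_edge L W x y -> gext_edge L W y x.
Proof. by case: x => ?; case: y. Qed.

Lemma factor_closed_prefix L : factor_closed L -> forall u v, L (u ++ v) -> L u.
Proof. by move=> hf u v h; apply: (hf [::] u v). Qed.

Lemma factor_closed_suffix L : factor_closed L -> forall u v, L (u ++ v) -> L v.
Proof. by move=> hf u v h; apply: (hf u v [::]); rewrite cats0. Qed.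

Lemma gext_bridge_tree_nil L W S T : factor_closed L -> [::] \in S -> {in S, forall s, s = [::]} ->
  bridge_tree (gext_vertex L W S T) (gext_edge L W).
Proof.
move=> hf S0 hS; set P := gext_vertex L W S T; set E := gext_edge L W.
have to_root x : P x -> clos_refl_trans _ (edge_in P E) x (inl [::]).
  case: x => [s [sS _]|t [tT ht]]; first by rewrite (hS s sS); apply: rt_refl.
  by apply: rt_step; do !split=> //; exact: factor_closed_prefix ht.
split.
  move=> x y px py; apply: rt_trans (to_root x px) _.
  by apply: clos_rt_sym (to_root y py) => ? ? [? ? ?]; split=> //; apply: gext_edge_sym.
have stuck t x y : clos_refl_trans_1n _ (edge_avoiding P E (inl [::]) (inr t)) x y ->
    x = inr t -> y = inr t.
  elim=> // x0 m y0 [_ pm em hne] _ _ ex0; subst x0.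
  case: m pm em hne => [s [sS _] _|? _ []] hne.
  by case: hne; right; rewrite (hS s sS).
have E_sym := @edge_avoiding_sym _ P E _ _ (@gext_edge_sym L W).
move=> [s|t] [s'|t'] //= [sS _] [tS _] _; rewrite ?(hS s sS) ?(hS s' tS) => hba.
  by move: (stuck t' _ _ (clos_rt_rt1n _ _ _ _ hba) erefl).
move/(clos_rt_sym (E_sym _ _))/(clos_rt_mono (@edge_avoidingC _ P E _ _)): hba.
by move=> hba; move: (stuck t _ _ (clos_rt_rt1n _ _ _ _ hba) erefl).
Qed.

Lemma gext_vertex_letters L W S T x : factor_closed L -> maximal_suffix_code L S ->
  {in S, forall s, size s = 1} ->
  (gext_vertex L W letters T x <-> gext_vertex L W S T x).
Proof.
move=> hf [_ hS] hS1; case: x => [s|t] //=; split=> -[sS hs]; split=> //.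
  have [c ec] := (mem_letters s).1 sS; subst s.
  have [s' s'S] := hS _ (factor_closed_prefix hf hs).
  have /= s'1 := hS1 s' s'S.
  by case/orP=> [/suffix_size_eq/(_ s'1) <- | /suffix_size_eq/(_ (esym s'1)) ->].
by apply/mem_letters; case: s sS hs (hS1 s sS) => [|c []] //; exists c.
Qed.

Definition extends_by_letter u s : bool := if s is _ :: s' then s' == u else false.

Lemma extends_by_letterP u s : reflect (exists c, s = c :: u) (extends_by_letter u s).
Proof.
case: s => [|c s] /=; first by constructor=> -[].
by apply: (iffP eqP) => [->|[_ [] //]]; exists c.
Qed.

Definition contract_code S u := u :: [seq s <- S | ~~ extends_by_letter u s].

Section Contraction.
Variables (L : seq A -> Prop) (S : seq (seq A)) (c0 : A) (u : seq A).
Hypothesis S_code : maximal_suffix_code L S.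
Hypothesis uS : c0 :: u \in S.
Hypothesis u_longest : {in S, forall s, size s <= size (c0 :: u)}.

Lemma longest_notin_code : u \notin S.
Proof.
apply/negP => h; have := S_code.1 _ _ h uS (suffix_cons _ _) => e.
by have := congr1 size e => /=; lia.
Qed.

Lemma extension_in_code c : L (c :: u) -> c :: u \in S.
Proof.
move=> hL; have [s sS /orP[hsuf|hsuf]] := S_code.2 _ hL.
  case/suffix_cons_inv: hsuf => [<- //|hsuf].
  have e := S_code.1 _ _ sS uS (suffix_trans hsuf (suffix_cons _ _)); subst s.
  by have := size_suffix hsuf => /=; lia.
have := size_suffix hsuf; have := u_longest sS => /= h1 h2.
by rewrite (suffix_size_eq hsuf) //= ; lia.
Qed.

Lemma contract_maximal : maximal_suffix_code L (contract_code S u).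
Proof.
have [S_suffix S_max] := S_code.
split.
  move=> s1 s2; rewrite !inE !mem_filter.
  move=> /orP[/eqP ->|/andP[ns1 s1S]] /orP[/eqP ->|/andP[ns2 s2S]] //.
  - case/suffixP=> -[|c [|d q]] /= e; subst s2.
    + by have := longest_notin_code; rewrite s2S.
    + by rewrite /= eqxx in ns2.
    + by have := u_longest s2S; rewrite /= size_cat; lia.
  - move=> hsuf; have e := S_suffix _ _ s1S uS (suffix_trans hsuf (suffix_cons _ _)).
    by subst s1; have := size_suffix hsuf => /=; lia.
  - exact: S_suffix.
move=> w hw; have [s sS hsw] := S_max w hw.
case ext: (extends_by_letter u s); last first.
  by exists s => //; rewrite inE mem_filter sS ext orbT.
exists u; first exact: mem_head.
have [c ec] := extends_by_letterP u s ext; subst s; case/orP: hsw => [hsuf|/suffix_cons_inv [->|->]].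
- by rewrite (suffix_trans (suffix_cons _ _) hsuf).
- by rewrite suffix_cons.
- by rewrite orbT.
Qed.

Lemma contract_weight : sumn (map size (contract_code S u)) < sumn (map size S).
Proof.
have := @sumn_size_filter _ (fun s => ~~ extends_by_letter u s) S (c0 :: u) uS.
by rewrite /= eqxx => /(_ isT); lia.
Qed.

Variables (T : seq (seq A)) (W : seq A).
Hypothesis L_factors : factor_closed L.
Hypothesis L_left : left_extendable L.

Definition letter_extension_vertex (x : seq A + seq A) : Prop :=
  if x is inl s then [/\ s \in S, extends_by_letter u s & L (s ++ W)] else False.

Lemma contract_link_tree :
  bridge_tree (gext_vertex L (u ++ W) letters T) (gext_edge L (u ++ W)) ->
  bridge_tree (link_vertex (gext_vertex L W S T) (gext_edge L W) letter_extension_vertex (inl u))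
    (gext_edge L W).
Proof.
pose f (x : seq A + seq A) := if x is inl s then inl (s ++ u) else x.
move=> hT; apply/(@bridge_tree_iso _ _ (gext_vertex L (u ++ W) letters T)
  (gext_edge L (u ++ W)) _ _ f) => //.
- by move=> [s|t] [s'|t'] //= [/catIs ->].
- case=> [s [[sS /extends_by_letterP [c ->] _]|[_ []]]|t _].
    by exists (inl [:: c]).
  by exists (inr t).
- case=> [s|t] /=; split.
  + case=> [[sS /extends_by_letterP [c ec] hs]|[_ []]].
    rewrite -catA in hs; split=> //; apply/mem_letters; exists c.
    by apply: (catIs (u := u)); rewrite ec.
  + move=> [/mem_letters [c ->] hs]; left; split; last by rewrite -catA.
    * by apply: extension_in_code; exact: factor_closed_prefix hs.
    * by apply/extends_by_letterP; exists c.
  + by case=> [//|[[[tT _] _] ht]]; rewrite -catA.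
  + rewrite -catA => -[tT ht]; right; do !split=> //.
    exact: factor_closed_suffix ht.
- by move=> [s|t] [s'|t'] _ _ //=; rewrite -!catA.
Qed.

Lemma contract_bridge_tree :
  bridge_tree (gext_vertex L (u ++ W) letters T) (gext_edge L (u ++ W)) ->
  bridge_tree (gext_vertex L W (contract_code S u) T) (gext_edge L W) ->
  bridge_tree (gext_vertex L W S T) (gext_edge L W).
Proof.
move=> /contract_link_tree link_tree contract_tree.
have new_ext x : letter_extension_vertex x ->
    exists c, [/\ x = inl (c :: u), c :: u \in S & L (c :: u ++ W)].
  by case: x => [s [sS /extends_by_letterP [c ec] hs]|//]; subst s; exists c.
have ext_new c : L (c :: u ++ W) -> letter_extension_vertex (inl (c :: u)).
  move=> h; split=> //; last by apply/extends_by_letterP; exists c.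
  by apply: extension_in_code; exact: (factor_closed_prefix L_factors (u := c :: u) (v := W) h).
apply: (subst_bridge_tree (@gext_edge_sym _ _) (@gext_edge_sym _ _) _ _ _ _ _ _
  contract_tree link_tree).
- by move=> x /new_ext [c [-> cuS huW]].
- by move=> [uS' _]; move: longest_notin_code; rewrite uS'.
- case=> [s|t]; split.
  + case; rewrite inE mem_filter => /orP[/eqP -> huW|/andP[ns sS] hs].
      left; split=> //; have [c hc] := L_left huW; exists (inl (c :: u)); exact: ext_new.
    right; split=> // /new_ext [c [[ec] _ _]].
    by rewrite ec /= eqxx in ns.
  + case=> [[[->] [y /new_ext [c [_ _ h]]]]|[[sS hs] ns]].
      by split; [exact: mem_head | exact: (factor_closed_suffix L_factors (u := [:: c]) h)].
    split=> //; rewrite inE mem_filter sS andbT; apply/orP; right; apply/negP => ext.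
    by apply: ns; split.
  + by move=> ht; right; split.
  + by case=> [[]|[]].
- by [].
- move=> x y /new_ext [c [-> _ _]]; case: y => // t h pt; split; first by split.
  exact: (factor_closed_suffix L_factors (u := [:: c]) h).
- case=> // t [[tT ht] _] hut; have [c hc] := L_left hut.
  exists (inl (c :: u)); split=> //; apply: ext_new.
  by apply: (factor_closed_prefix L_factors (u := c :: u ++ W) (v := t)); rewrite /= -catA.
Qed.
End Contraction.

Section LeftInduction.
Variables (L : seq A -> Prop) (n : nat) (T : seq (seq A)).
Hypothesis L_factors : factor_closed L.
Hypothesis L_left : left_extendable L.
Hypothesis letters_tree :
  forall W, n <= size W -> bridge_tree (gext_vertex L W letters T) (gext_edge L W).

Lemma suffix_code_bridge_tree S W : maximal_suffix_code L S -> n <= size W ->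
  bridge_tree (gext_vertex L W S T) (gext_edge L W).
Proof.
have [k] := ubnP (sumn (map size S)); elim: k S W => // k IH S W hk hS hW.
case S0 : ([::] \in S).
  apply: gext_bridge_tree_nil => // s sS.
  exact/esym/(hS.1 _ _ S0 sS)/suffix0s.
case S1 : (has (fun s => 1 < size s) S); last first.
  apply: (bridge_tree_ext _ (fun _ _ => iff_refl _) (letters_tree hW)) => x.
  apply: gext_vertex_letters => // s sS.
  by move/hasPn: S1 => /(_ s sS); case: s sS => [|? []] //; rewrite S0.
have [u uS u_longest] : exists2 u, u \in S & {in S, forall s, size s <= size u}.
  by apply: longest_word; case: (S) S1.
have u2 : 1 < size u by case/hasP: S1 => s sS hs; exact: leq_trans hs (u_longest s sS).
case: u uS u_longest u2 => [//|c0 u] uS u_longest u2.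
apply: (contract_bridge_tree hS uS u_longest L_factors L_left).
  by apply: letters_tree; rewrite size_cat; lia.
apply: IH => //; last exact: contract_maximal hS uS u_longest.
by have := contract_weight uS; lia.
Qed.
End LeftInduction.
End Words.
Arguments letters {A}.

Section Reversal.
Variable A : finType.
Implicit Types (L : seq A -> Prop) (W s t : seq A) (S T : seq (seq A)).

Definition rev_lang L (w : seq A) : Prop := L (rev w).

Lemma factor_closed_rev L : factor_closed L -> factor_closed (rev_lang L).
Proof. by move=> hf u v w; rewrite /rev_lang !rev_cat -catA => /hf. Qed.

Lemma left_extendable_rev L : right_extendable L -> left_extendable (rev_lang L).
Proof. by move=> hr w /hr [a h]; exists a; rewrite /rev_lang rev_cons. Qed.

Lemma maximal_suffix_code_rev L T :
  maximal_prefix_code L T -> maximal_suffix_code (rev_lang L) (map rev T).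
Proof.
move=> [hT hmax]; split.
  move=> _ _ /mapP [t1 t1T ->] /mapP [t2 t2T ->]; rewrite suffix_rev => h.
  by rewrite (hT _ _ t1T t2T h).
move=> w /hmax [t tT ht]; exists (rev t); first exact: map_f.
by rewrite suffix_revLR -prefix_revLR.
Qed.

Lemma map_rev_letters : map rev (@letters A) = letters.
Proof. by rewrite /letters -map_comp; apply: eq_map. Qed.

Definition swap_rev (x : seq A + seq A) : seq A + seq A :=
  match x with inl s => inr (rev s) | inr t => inl (rev t) end.

Lemma gext_bridge_tree_rev L W S T :
  bridge_tree (gext_vertex (rev_lang L) (rev W) (map rev T) (map rev S))
    (gext_edge (rev_lang L) (rev W)) <->
  bridge_tree (gext_vertex L W S T) (gext_edge L W).
Proof.
apply: (@bridge_tree_iso _ _ _ _ _ _ swap_rev).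
- by case=> [s|t] [s'|t'] //= [] /rev_inj ->.
- by case=> [s|t] _; [exists (inr (rev s)) | exists (inl (rev t))]; rewrite /= revK.
- by case=> [s|t] /=; rewrite (mem_map rev_inj) /rev_lang rev_cat !revK.
- by case=> [s|t] [s'|t'] _ _ //=; rewrite /rev_lang !rev_cat !revK catA.
Qed.
End Reversal.

Section TwoSided.
Variables (A : finType) (L : seq A -> Prop) (n : nat).
Hypothesis L_factors : factor_closed L.
Hypothesis L_left : left_extendable L.
Hypothesis L_right : right_extendable L.
Hypothesis letters_tree :
  forall W, n <= size W -> bridge_tree (gext_vertex L W letters letters) (gext_edge L W).

Theorem code_bridge_tree S T W :
  maximal_suffix_code L S -> maximal_prefix_code L T -> n <= size W ->
  bridge_tree (gext_vertex L W S T) (gext_edge L W).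
Proof.
move=> hS hT hW; apply: (suffix_code_bridge_tree (n := n) L_factors L_left) => // W' hW'.
apply/gext_bridge_tree_rev; rewrite map_rev_letters.
apply: (suffix_code_bridge_tree (n := n)); rewrite ?size_rev //.
- exact: factor_closed_rev.
- exact: left_extendable_rev.
- move=> V hV; rewrite -map_rev_letters -[V]revK.
  by apply/gext_bridge_tree_rev/letters_tree; rewrite size_rev.
- exact: maximal_suffix_code_rev.
Qed.
End TwoSided.

(** * Shift spaces and their decodings *)

Section Language.
Variables (A : finType) (X : (Z -> A) -> Prop).

Lemma nth_window (x : Z -> A) i N k d :
  (k < N)%N -> nth d (window x i N) k = x (Z.add i (Z.of_nat k)).
Proof. by move=> h; rewrite /window nth_mkseq. Qed.

Lemma size_window (x : Z -> A) i N : size (window x i N) = N.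
Proof. exact: size_mkseq. Qed.

Lemma Lang_factor_closed : factor_closed (Lang X).
Proof.
move=> u v w [x [i [hx e]]]; exists x, (Z.add i (Z.of_nat (size u))); split=> //.
case: v e => [|d v'] e; first by rewrite /window.
apply: (@eq_from_nth _ d); first by rewrite size_window.
move=> k; rewrite size_window => hk; rewrite nth_window //.
have : nth d (u ++ (d :: v') ++ w) (size u + k) = nth d (d :: v') k.
  by rewrite nth_cat ltnNge leq_addr addKn nth_cat hk.
rewrite -e nth_window; last by rewrite !size_cat /=; move: hk => /=; lia.
by move=> <-; congr (x _); lia.
Qed.

Lemma Lang_left_extendable : left_extendable (Lang X).
Proof.
move=> w [x [i [hx e]]]; exists (x (Z.sub i 1)), x, (Z.sub i 1); split=> //.
apply: (@eq_from_nth _ (x i)); first by rewrite size_window.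
move=> k; rewrite size_window => hk; rewrite nth_window //.
case: k hk => [|k] hk /=; first by congr (x _); lia.
by rewrite -e nth_window //; congr (x _); lia.
Qed.

Lemma Lang_right_extendable : right_extendable (Lang X).
Proof.
move=> w [x [i [hx e]]]; exists (x (Z.add i (Z.of_nat (size w)))), x, i; split=> //.
apply: (@eq_from_nth _ (x i)); first by rewrite size_window.
move=> k; rewrite size_window size_rcons => hk; rewrite nth_window // nth_rcons.
case: ltnP => h; first by rewrite -e nth_window.
have -> : k = size w by lia.
by rewrite eqxx.
Qed.
End Language.

Section Completeness.
Variables (A : finType) (L : seq A -> Prop) (U : seq (seq A)).

Lemma maximal_suffix_code_of_complete : left_extendable L ->
  {in U &, forall s1 s2, suffix s1 s2 -> s1 = s2} ->
  (exists N, forall w, L w -> N <= size w -> exists2 u, u \in U & suffix u w) ->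
  maximal_suffix_code L U.
Proof.
move=> hl hU [N hN]; split=> // w hw.
have [p [hp hpw]] : exists p, size p = N /\ L (p ++ w).
  elim: N {hN} => [|k [p [hp hpw]]]; first by exists [::].
  by have [a ha] := hl _ hpw; exists (a :: p); rewrite /= hp.
have [|u uU hu] := hN _ hpw; first by rewrite size_cat hp leq_addr.
by exists u => //; apply: suffix_total hu (suffix_suffix _ _).
Qed.

Lemma maximal_prefix_code_of_complete : right_extendable L ->
  {in U &, forall t1 t2, prefix t1 t2 -> t1 = t2} ->
  (exists N, forall w, L w -> N <= size w -> exists2 u, u \in U & prefix u w) ->
  maximal_prefix_code L U.
Proof.
move=> hr hU [N hN]; split=> // w hw.
have [p [hp hwp]] : exists p, size p = N /\ L (w ++ p).
  elim: N {hN} => [|k [p [hp hwp]]]; first by exists [::]; rewrite cats0.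
  by have [a ha] := hr _ hwp; exists (rcons p a); rewrite size_rcons hp -rcons_cat.
have [|u uU hu] := hN _ hwp; first by rewrite size_cat hp leq_addl.
by exists u => //; apply: prefix_total hu (prefix_prefix _ _).
Qed.
End Completeness.

Lemma dendric_letters_tree (A : finType) (X : (Z -> A) -> Prop) n :
  eventually_dendric X n -> forall W, n <= size W ->
  bridge_tree (gext_vertex (Lang X) W letters letters) (gext_edge (Lang X) W).
Proof.
move=> hd W hW; have hf := @Lang_factor_closed A X.
case: (classic (Lang X W)) => hLW; last first.
  apply: bridge_tree_empty => -[s|t] [_ h]; apply: hLW.
    exact: (factor_closed_suffix hf (u := s) h).
  exact: (factor_closed_prefix hf (v := t) h).
have irr x : ~ ext_edge (Lang X) W x x by case: x => ? /=.
pose f (x : A + A) := match x with inl a => inl [:: a] | inr b => inr [:: b] end.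
apply/(@bridge_tree_iso _ _ (ext_vertex (Lang X) W) (ext_edge (Lang X) W) _ _ f).
- by move=> [a|b] [a'|b'] //= [] ->.
- by case=> [s|t] [/mem_letters [c ->] _]; [exists (inl c) | exists (inr c)].
- case=> [a|b] /=; rewrite ?cats1; split=> [[] //|h]; split=> //.
  + by apply/mem_letters; exists a.
  + by apply/mem_letters; exists b.
- by move=> [a|b] [a'|b'] _ _ //=; rewrite cats1.
exact: bridge_tree_of_graph_is_tree irr (hd W hLW hW).
Qed.

Lemma size_morph_ext (A B : Type) (phi : B -> seq A) (w : seq B) :
  (forall b, 0 < size (phi b)) -> size w <= size (morph_ext phi w).
Proof.
move=> h; rewrite /morph_ext; elim: w => //= b w IH.
by rewrite size_cat; have := h b; lia.
Qed.

Lemma decoding_bridge_tree (A B : finType) (phi : B -> seq A) (LX : seq A -> Prop)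
    (LY : seq B -> Prop) (U : seq (seq A)) (w : seq B) :
  injective phi -> (forall u, u \in U <-> exists b, phi b = u) ->
  (forall v, LY v <-> LX (morph_ext phi v)) ->
  bridge_tree (gext_vertex LX (morph_ext phi w) U U) (gext_edge LX (morph_ext phi w)) ->
  bridge_tree (ext_vertex LY w) (ext_edge LY w).
Proof.
move=> phi_inj phi_onto LY_LX hT.
pose f (x : B + B) := match x with inl b => inl (phi b) | inr b => inr (phi b) end.
have phiU b : phi b \in U by apply/phi_onto; exists b.
apply: (iffLR (@bridge_tree_iso _ _ (ext_vertex LY w) (ext_edge LY w) _ _ f _ _ _ _) hT).
- by move=> [a|b] [a'|b'] //= [] /phi_inj ->.
- by case=> [s|t] [/phi_onto [b <-] _]; [exists (inl b) | exists (inr b)].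
- by case=> [a|b] /=; rewrite LY_LX /morph_ext ?map_rcons ?flatten_rcons; split=> [[]|].
- by move=> [a|b] [a'|b'] _ _ //=; rewrite LY_LX /morph_ext /= map_rcons flatten_rcons.
Qed.

Theorem mainTheorem19 (A : finType) (X : (Z -> A) -> Prop) (n : nat)
  (U : seq (seq A)) (B : finType) (phi : B -> seq A) (Y : (Z -> B) -> Prop) :
  is_shift_space X ->
  eventually_dendric X n ->
  (forall u, u \in U -> Lang X u) ->
  bifix_code U ->
  two_sided_complete X U ->
  injective phi ->
  (forall u, u \in U <-> exists b, phi b = u) ->
  is_shift_space Y ->
  (forall v : seq B, Lang Y v <-> Lang X (morph_ext phi v)) ->
  eventually_dendric Y n.
Proof.
move=> _ X_dendric _ U_bifix [U_right U_left] phi_inj phi_onto _ LY w _ hn.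
apply/graph_is_tree_of_bridge/(decoding_bridge_tree phi_inj phi_onto LY).
have LX_factors := @Lang_factor_closed A X.
case U0 : ([::] \in U).
  apply: gext_bridge_tree_nil => // s sU.
  by apply: esym; apply: (U_bifix _ _ U0 sU).1; exact: prefix0s.
apply: (code_bridge_tree (n := n)) => //.
- exact: Lang_left_extendable.
- exact: Lang_right_extendable.
- exact: dendric_letters_tree.
- apply: maximal_suffix_code_of_complete; [exact: Lang_left_extendable | | exact: U_left].
  by move=> u v uU vU; apply: (U_bifix u v uU vU).2.
- apply: maximal_prefix_code_of_complete; [exact: Lang_right_extendable | | exact: U_right].
  by move=> u v uU vU; apply: (U_bifix u v uU vU).1.
apply: leq_trans hn (size_morph_ext _ _) => b.
have : phi b \in U by apply/phi_onto; exists b.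
by case: (phi b) => //; rewrite U0.
Qed.
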